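(* Let $X$ be a set, $U\subset 2^X$ a non-empty family closed under $\Delta$ and $\cap$, and $\mu:U\to B_2$ a function. (a) If $\mu$ is a measure, then for every ascending sequence $A_0\subset A_1\subset A_2\subset\cdots$ of sets in $U$ such that $A=\bigcup_n A_n\in U$, the binary sequence $(\mu(A_n))_n$ is convergent and $\mu(A)=\lim_{n\to\infty}\mu(A_n)$. (b) Suppose $\mu$ is additive and has the property: for every ascending sequence $(A_n)$ of sets in $U$ whose union $A$ belongs to $U$, the binary sequence $(\mu(A_n))_n$ is convergent and $\mu(A)=\lim_{n\to\infty}\mu(A_n)$. Then $\mu$ is a measure.
   Context: $B_2=\{0,1\}$ with $\oplus$ addition modulo 2. $\mu$ is additive if $\mu(A\Delta B)=\mu(A)\oplus\mu(B)$ for all $A,B\in U$ (equivalently $\mu(A\cup B)=\mu(A)\oplus\mu(B)$ whenever $A\cap B=\emptyset$). $\mu$ is a measure (countably additive) if for every sequence $(A_n)$ of pairwise disjoint sets of $U$ with $\bigcup_nA_n\in U$, the set $\{n:\mu(A_n)=1\}$ is finite and $\mu(\bigcup_nA_n)$ equals the number of such $n$ modulo 2. A binary sequence $(x_n)$ converges to $x_0\in B_2$ if there is $N$ with $x_n=x_0$ for all $n\ge N$; the limit is then $x_0$. *)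

From mathcomp Require Import all_boot.
From mathcomp Require Import classical_sets.
Set Implicit Arguments. Unset Strict Implicit. Unset Printing Implicit Defensive.
Local Open Scope classical_set_scope.

(* B_2 = bool, with addition modulo 2 = addb (xor). *)

Definition symdiff {X : Type} (A B : set X) : set X := (A `\` B) `|` (B `\` A).

Definition ring_family {X : Type} (U : set (set X)) : Prop :=
  (exists A, U A) /\
  (forall A B, U A -> U B -> U (symdiff A B)) /\
  (forall A B, U A -> U B -> U (A `&` B)).

Definition additive {X : Type} (U : set (set X)) (mu : set X -> bool) : Prop :=
  forall A B, U A -> U B -> mu (symdiff A B) = addb (mu A) (mu B).

(* mu is a measure: for every pairwise disjoint sequence in U with union in U,
   {n | mu (A n) = 1} is finite (i.e. bounded by some N) and mu of the union
   equals the number of such n modulo 2 (= xor of mu (A n), n < N). *)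
Definition is_measure {X : Type} (U : set (set X)) (mu : set X -> bool) : Prop :=
  forall A : nat -> set X,
    (forall n, U (A n)) ->
    (forall i j, i <> j -> A i `&` A j = set0) ->
    U (\bigcup_n A n) ->
    exists N : nat,
      (forall n, (N <= n)%N -> mu (A n) = false) /\
      mu (\bigcup_n A n) = \big[addb/false]_(n < N) mu (A n).

Definition bin_cvg_to (s : nat -> bool) (x0 : bool) : Prop :=
  exists N : nat, forall n, (N <= n)%N -> s n = x0.

Definition ascending_continuous {X : Type} (U : set (set X)) (mu : set X -> bool) : Prop :=
  forall A : nat -> set X,
    (forall n, U (A n)) ->
    (forall n, A n `<=` A n.+1) ->
    U (\bigcup_n A n) ->
    bin_cvg_to (fun n => mu (A n)) (mu (\bigcup_n A n)).

From mathcomp Require Import all_boot.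
From mathcomp Require Import boolp classical_sets sequences.
Set Implicit Arguments. Unset Strict Implicit. Unset Printing Implicit Defensive.
Local Open Scope classical_set_scope.

(* Both parts rest on finite additivity along partial unions: for a disjoint
   sequence D in U, the partial union S_n of D_0, ..., D_(n-1) lies in U and
   mu(S_n) = mu(D_0) xor ... xor mu(D_(n-1)).
   (a) An ascending sequence A is the sequence of partial unions of its
   successive differences, whose union is that of A; the measure makes the
   partial xors eventually equal to mu of the union.
   (b) The partial unions of a disjoint sequence ascend to its union, so
   mu(S_n) is eventually mu of the union, and mu(D_n) = mu(S_n) xor mu(S_(n+1))
   eventually vanishes. *)

Lemma big_ord_idx_tail (R : Type) (idx : R) (op : Monoid.law idx)
    (F : nat -> R) (N M : nat) :
  (N <= M)%N -> (forall n, (N <= n)%N -> F n = idx) ->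
  \big[op/idx]_(n < M) F n = \big[op/idx]_(n < N) F n.
Proof.
move=> leNM F_tail; rewrite -!(big_mkord xpredT) (big_cat_nat (leq0n N) leNM).
rewrite [X in op _ X]big1_seq ?Monoid.mulm1 // => n /andP[_].
by rewrite mem_index_iota => /andP[/F_tail].
Qed.

Lemma trivIsetT_disjoint (X : Type) (F : nat -> set X) :
  trivIset setT F <-> (forall i j, i <> j -> F i `&` F j = set0).
Proof.
rewrite trivIsetP; split=> tF i j; first by move/eqP; exact: tF.
by move=> _ _ /eqP; exact: tF.
Qed.

Lemma trivIset_bigsetU_setI (X : Type) (D : nat -> set X) (n : nat) :
  trivIset setT D -> \big[setU/set0]_(k < n) D k `&` D n = set0.
Proof.
by move=> tD; apply: (@trivIset_bigsetUI _ predT) => // i j _ _; exact: tD.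
Qed.

Section SymmetricDifference.
Variable X : Type.
Implicit Types A B : set X.

Lemma symdiffv A : symdiff A A = set0.
Proof. by apply/seteqP; split=> x // [] []. Qed.

Lemma symdiff_disjoint A B : A `&` B = set0 -> symdiff A B = A `|` B.
Proof.
move/disjoints_subset=> AnB; apply/seteqP; split=> x.
  by case=> -[? _]; [left|right].
by case=> [Ax|Bx]; [left|right]; split=> //; [exact: AnB|move/AnB].
Qed.

Lemma symdiffIr A B : symdiff A (A `&` B) = A `\` B.
Proof.
apply/seteqP; split=> x; last by move=> [Ax nBx]; left; split=> // -[].
by case=> -[Ax nABx]; [split=> // Bx; exact: nABx | case: nABx; case: Ax].
Qed.

End SymmetricDifference.

Section RingFamily.
Variables (X : Type) (U : set (set X)).
Hypothesis ringU : ring_family U.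

Lemma ring_family_set0 : U set0.
Proof.
case: ringU => -[A UA] [U_symdiff _].
by rewrite -(symdiffv A); exact: U_symdiff.
Qed.

Lemma ring_family_setU_disjoint A B :
  U A -> U B -> A `&` B = set0 -> U (A `|` B).
Proof.
by case: ringU => _ [U_symdiff _] UA UB /symdiff_disjoint <-; exact: U_symdiff.
Qed.

Lemma ring_family_setD A B : U A -> U B -> U (A `\` B).
Proof.
case: ringU => _ [U_symdiff U_setI] UA UB.
by rewrite -symdiffIr; apply: U_symdiff => //; exact: U_setI.
Qed.

Lemma ring_family_bigsetU (D : nat -> set X) (n : nat) :
  trivIset setT D -> (forall k, U (D k)) -> U (\big[setU/set0]_(k < n) D k).
Proof.
move=> tD UD; elim: n => [|n IHn].
  by rewrite big_ord0; exact: ring_family_set0.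
rewrite big_ord_recr /=; apply: ring_family_setU_disjoint => //.
exact: trivIset_bigsetU_setI.
Qed.

End RingFamily.

Definition disjoint_additive {X : Type} (U : set (set X))
    (mu : set X -> bool) :=
  forall A B, U A -> U B -> A `&` B = set0 -> mu (A `|` B) = addb (mu A) (mu B).

Lemma additive_disjoint_additive (X : Type) (U : set (set X))
    (mu : set X -> bool) :
  additive U mu -> disjoint_additive U mu.
Proof. by move=> addU A B UA UB /symdiff_disjoint <-; exact: addU. Qed.

Section DisjointAdditive.
Variables (X : Type) (U : set (set X)) (mu : set X -> bool).
Hypotheses (ringU : ring_family U) (addU : disjoint_additive U mu).

Lemma disjoint_additive_set0 : mu set0 = false.
Proof.
have U0 := ring_family_set0 ringU.
by rewrite -(addbb (mu set0)) -addU ?setU0 ?set0I.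
Qed.

Lemma disjoint_additive_bigsetU (D : nat -> set X) (n : nat) :
  trivIset setT D -> (forall k, U (D k)) ->
  mu (\big[setU/set0]_(k < n) D k) = \big[addb/false]_(k < n) mu (D k).
Proof.
move=> tD UD; elim: n => [|n IHn].
  by rewrite !big_ord0; exact: disjoint_additive_set0.
rewrite !big_ord_recr /= addU ?IHn //; first exact: (ring_family_bigsetU ringU).
exact: trivIset_bigsetU_setI.
Qed.

End DisjointAdditive.

Section Measure.
Variables (X : Type) (U : set (set X)) (mu : set X -> bool).
Hypotheses (ringU : ring_family U) (measure_mu : is_measure U mu).

Lemma measure_bigcup_xor (D : nat -> set X) :
  (forall n, U (D n)) -> trivIset setT D -> U (\bigcup_n D n) ->
  exists N, forall M, (N <= M)%N ->
    mu (\bigcup_n D n) = \big[addb/false]_(n < M) mu (D n).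
Proof.
move=> UD /trivIsetT_disjoint tD UbigD.
have [N [D_tail ->]] := measure_mu UD tD UbigD.
by exists N => M leNM; rewrite (big_ord_idx_tail _ leNM D_tail).
Qed.

Lemma measure_set0 : mu set0 = false.
Proof.
have U0 := ring_family_set0 ringU.
have [||N [empty_tail _]] := @measure_mu (fun=> set0) (fun=> U0).
- by move=> i j _; rewrite setI0.
- by rewrite bigcup0.
exact: empty_tail N (leqnn N).
Qed.

Lemma measure_disjoint_additive : disjoint_additive U mu.
Proof.
move=> A B UA UB AB0.
have U_AB n : U (bigcup2 A B n).
  by case: n => [|[|n]] //=; exact: ring_family_set0.
have tAB : trivIset setT (bigcup2 A B) by rewrite -trivIset_bigcup2.
have UbigAB : U (\bigcup_n bigcup2 A B n).
  by rewrite bigcup2E; exact: ring_family_setU_disjoint.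
have [N xorN] := measure_bigcup_xor U_AB tAB UbigAB.
rewrite -bigcup2E (xorN _ (leq_maxl N 2)).
rewrite (@big_ord_idx_tail _ _ addb (fun n => mu (bigcup2 A B n)) 2)
  ?leq_maxr //.
  by rewrite !big_ord_recr big_ord0.
by case=> [|[|n]] //= _; exact: measure_set0.
Qed.

Lemma measure_ascending_continuous : ascending_continuous U mu.
Proof.
move=> A UA A_incr UbigA.
have ndA : nondecreasing_seq A.
  by apply/nondecreasing_seqP => n; apply/subsetPset.
have UD n : U (seqD A n).
  by case: n => [|n] //=; exact: ring_family_setD.
have tD := trivIset_seqD ndA.
have UbigD : U (\bigcup_n seqD A n) by rewrite eq_bigcup_seqD.
have [N xorN] := measure_bigcup_xor UD tD UbigD.
exists N => n leNn.
rewrite -(nondecreasing_bigsetU_seqD n ndA) -eq_bigcup_seqD.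
rewrite (xorN n.+1 (leqW leNn)).
exact: (disjoint_additive_bigsetU ringU measure_disjoint_additive).
Qed.

End Measure.

Lemma additive_ascending_continuous_measure (X : Type) (U : set (set X))
    (mu : set X -> bool) :
  ring_family U -> additive U mu -> ascending_continuous U mu -> is_measure U mu.
Proof.
move=> ringU /additive_disjoint_additive addU contU D UD.
move=> /trivIsetT_disjoint tD UbigD.
pose S n := \big[setU/set0]_(k < n.+1) D k.
have US n : U (S n) by exact: (ring_family_bigsetU ringU).
have muS n : mu (S n) = \big[addb/false]_(k < n.+1) mu (D k).
  exact: (disjoint_additive_bigsetU ringU addU).
have bigS : \bigcup_n S n = \bigcup_n D n by exact: bigcup_bigsetU_bigcup.
have S_incr n : S n `<=` S n.+1 by exact: subset_bigsetU.
have UbigS : U (\bigcup_n S n) by rewrite bigS.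
have [N S_lim] := contU S US S_incr UbigS.
rewrite bigS in S_lim.
exists N.+1; split.
- case=> [//|n]; rewrite ltnS => leNn.
  have -> : mu (D n.+1) = addb (mu (S n)) (mu (S n.+1)).
    by rewrite !muS (big_ord_recr n.+1) /= addKb.
  by rewrite !S_lim ?addbb // leqW.
- by rewrite -muS S_lim.
Qed.

Theorem theorem4p2 (X : Type) (U : set (set X)) (mu : set X -> bool) :
  ring_family U ->
  (is_measure U mu -> ascending_continuous U mu) /\
  (additive U mu -> ascending_continuous U mu -> is_measure U mu).
Proof.
move=> ringU; split; first exact: measure_ascending_continuous.
exact: additive_ascending_continuous_measure.
Qed.
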